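(* For a binary word $\mathrm x$ of length $m$ and $n\geq0$ let $\widetilde P_{\bar T^{-n}[\![\mathrm x]\!]}=P_{\bar T^{-n}[\![\mathrm x]\!]}\oplus P'_{[\![1]\!]}P_{\bar T^{-n}[\![\mathrm x]\!]}$, an operator on $\widetilde{\mathcal H}$. Then for all $n,m$ with $n+m<\Bbbk-1$, $$\widetilde U_\theta^*\,\widetilde P_{\bar T^{-n}[\![\mathrm x]\!]}\,\widetilde U_\theta=\widetilde P_{\bar T^{-n-1}[\![\mathrm x]\!]}.$$
   Context: Let $\Bbbk\geq3$ and $\mathcal H=(\mathbb C^2)^{\otimes\Bbbk}$ with orthonormal basis $|\mathrm y\rangle=|\mathrm y_1\rangle\otimes\cdots\otimes|\mathrm y_\Bbbk\rangle$, $\mathrm y_i\in\{0,1\}$. For a binary word $\mathrm w=\mathrm w_1\dots\mathrm w_m$ ($m\leq\Bbbk$), $P_{[\![\mathrm w]\!]}$ is the orthogonal projection onto the span of the $|\mathrm y\rangle$ with $\mathrm y_1\dots\mathrm y_m=\mathrm w$; $[\![\mathrm w]\!]\subset[0,1]$ is the dyadic cylinder of points whose first $m$ binary digits are $\mathrm w$. $\bar T(x)=2x\bmod1$, so $\bar T^{-n}[\![\mathrm w]\!]=\bigcup_{|\mathrm y|=n}[\![\mathrm y\mathrm w]\!]$, and $P_{\bar T^{-n}[\![\mathrm w]\!]}=\sum_{|\mathrm y|=n}P_{[\![\mathrm y\mathrm w]\!]}$. Let $\mathbf U$ be a $2\times2$ unitary with all entries of modulus $2^{-1/2}$, $\bar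 U|\mathrm y\rangle=|\mathrm y_2\rangle\otimes\cdots\otimes|\mathrm y_\Bbbk\rangle\otimes\mathbf U|\mathrm y_1\rangle$, $\sigma$ the unitary exchanging the last two tensor factors, and $P'_{[\![j]\!]}=\bar UP_{[\![j]\!]}\bar U^*$ for $j\in\{0,1\}$. Tower space $\widetilde{\mathcal H}=\mathcal H\oplus P'_{[\![1]\!]}\mathcal H$ with the direct-sum scalar product, and $\widetilde U_\theta(\phi_0,\phi_1)=\big(\sigma\bar UP'_{[\![1]\!]}\phi_1+\bar UP_{[\![0]\!]}\phi_0,\ e^{i\theta}\bar UP_{[\![1]\!]}\phi_0\big)$, $\theta\in\mathbb R$. *)

From HB Require Import structures.
From mathcomp Require Import all_boot all_order all_algebra.
From mathcomp Require Import complex.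
From mathcomp Require Import reals trigo.
Unset Printing Implicit Defensive.
Import Order.TTheory GRing.Theory Num.Theory.
Local Open Scope ring_scope.
Local Open Scope complex_scope.

Section Defs.
Context {R : realType}.
Notation C := R[i].

(* binary words of length k: the basis |y> of H = (C^2)^{(x)k} *)
Definition word (k : nat) := (k.-tuple bool)%type.

(* operators on the finite-dimensional space with orthonormal basis indexed by
   the finite type T, given by their matrix entries  A y z = <y| A |z>. *)
Definition op (T : finType) := T -> T -> C.

Definition opmul {T : finType} (A B : op T) : op T :=
  fun y z => \sum_(w : T) A y w * B w z.
Definition opadj {T : finType} (A : op T) : op T := fun y z => (A z y)^*.
Definition opadd {T : finType} (A B : op T) : op T := fun y z => A y z + B y z.
Definition opscale {T : finType} (c : C) (A : op T) : op T := fun y z => c * A y z.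
Definition op0 {T : finType} : op T := fun _ _ => 0.

(* P_[[w]] : projection onto span{|y> : y_1..y_m = w}, m = size w *)
Definition Pcyl k (w : seq bool) : op (word k) :=
  fun y z => ((y == z) && (take (size w) y == w))%:R.

(* P_{Tbar^{-n}[[w]]} = \sum_{|y| = n} P_[[y w]] *)
Definition PT k (n : nat) (w : seq bool) : op (word k) :=
  fun y z => \sum_(u : n.-tuple bool) Pcyl k (u ++ w) y z.

Definition bit (b : bool) : 'I_2 := if b then ord_max else ord0.

(* Ubar |z> = |z_2 ... z_k> (x) U |z_1> = \sum_b U_{b, z_1} |z_2 ... z_k b> *)
Definition Ubar k (U : 'M[C]_2) : op (word k) :=
  fun y z => \sum_(b : bool) ((val y == rcons (behead z) b)%:R * U (bit b) (bit (head false z))).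

Definition swap_last2 (s : seq bool) : seq bool :=
  take (size s - 2) s ++ [:: nth false s (size s - 1); nth false s (size s - 2)].
Definition sigma k : op (word k) := fun y z => (val y == swap_last2 z)%:R.

Definition Pprime k (U : 'M[C]_2) (j : bool) : op (word k) :=
  opmul (opmul (Ubar k U) (Pcyl k [:: j])) (opadj (Ubar k U)).

(* operators on H (+) H, indexed by word k + word k, given by 2x2 blocks *)
Definition block (k : nat) (A00 A01 A10 A11 : op (word k)) : op (word k + word k)%type :=
  fun y z => match y, z with
             | inl y', inl z' => A00 y' z'
             | inl y', inr z' => A01 y' z'
             | inr y', inl z' => A10 y' z'
             | inr y', inr z' => A11 y' z'
             end.

Definition expi (t : R) : C := (cos t +i* sin t).

(* Utilde_theta (phi0, phi1) =
     (sigma Ubar P'_[[1]] phi1 + Ubar P_[[0]] phi0, e^{i theta} Ubar P_[[1]] phi0) *)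
Definition Utilde k (U : 'M[C]_2) (theta : R) : op (word k + word k)%type :=
  block k (opmul (Ubar k U) (Pcyl k [:: false]))
        (opmul (opmul (sigma k) (Ubar k U)) (Pprime k U true))
        (opscale (expi theta) (opmul (Ubar k U) (Pcyl k [:: true])))
        op0.

Definition Ptilde k (U : 'M[C]_2) (n : nat) (x : seq bool) : op (word k + word k)%type :=
  block k (PT k n x) op0 op0 (opmul (Pprime k U true) (PT k n x)).

End Defs.

From HB Require Import structures.
From mathcomp Require Import all_boot all_order all_algebra.
From mathcomp Require Import complex.
From mathcomp Require Import reals trigo.
From mathcomp Require Import zify ring.
From Stdlib Require Import FunctionalExtensionality.
Import Order.TTheory GRing.Theory Num.Theory.
Local Open Scope ring_scope.

(* In block form Utilde = [[Ubar P_0, sigma Ubar P'_1], [e^{i theta} Ubar P_1, 0]],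
   so conjugating the block-diagonal Ptilde produces four blocks.  The projection
   P_{T^-n[[x]]} is diagonal in the word basis and Ubar shifts it by one step,
   P_{T^-n[[x]]} Ubar = Ubar P_{T^-n-1[[x]]}, while sigma commutes with it as long
   as the cylinder stays away from the last two letters (n + |x| <= k - 2).  As
   Ubar and sigma are isometries, the diagonal blocks reduce to P_{T^-n-1[[x]]}
   and P'_1 P_{T^-n-1[[x]]}.  The off-diagonal blocks vanish because
   P_0 Ubar^* sigma Ubar Ubar P_1 = 0: its entries are inner products of the two
   columns of U. *)

Section OperatorAlgebra.
Context {R : realType} {T : finType}.
Implicit Types (A B D E X : @op R T) (f g : pred T).

Lemma op_ext A B : (forall y z, A y z = B y z) -> A = B.
Proof. by move=> eqAB; do 2 apply: functional_extensionality => ?; exact: eqAB. Qed.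

Lemma opmulA A B D : opmul A (opmul B D) = opmul (opmul A B) D.
Proof.
apply: op_ext => y z; rewrite /opmul.
under eq_bigr do rewrite big_distrr.
rewrite exchange_big /=; apply: eq_bigr => w _.
by rewrite big_distrl /=; apply: eq_bigr => v _; rewrite mulrA.
Qed.

Lemma opmulA_rew A B D E : opmul A B = opmul D E ->
  forall X, opmul (opmul X A) B = opmul (opmul X D) E.
Proof. by move=> eqAB X; rewrite -!opmulA eqAB. Qed.

Lemma opmul0l A : opmul op0 A = op0.
Proof. by apply: op_ext => y z; rewrite /opmul big1 // => w _; rewrite mul0r. Qed.

Lemma opmul0r A : opmul A op0 = op0.
Proof. by apply: op_ext => y z; rewrite /opmul big1 // => w _; rewrite mulr0. Qed.

Lemma opadd0l A : opadd op0 A = A.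
Proof. by apply: op_ext => y z; rewrite /opadd add0r. Qed.

Lemma opadd0r A : opadd A op0 = A.
Proof. by apply: op_ext => y z; rewrite /opadd addr0. Qed.

Lemma opmulZl c A B : opmul (opscale c A) B = opscale c (opmul A B).
Proof.
apply: op_ext => y z; rewrite /opmul /opscale big_distrr /=.
by apply: eq_bigr => w _; rewrite mulrA.
Qed.

Lemma opmulZr c A B : opmul A (opscale c B) = opscale c (opmul A B).
Proof.
apply: op_ext => y z; rewrite /opmul /opscale big_distrr /=.
by apply: eq_bigr => w _; rewrite mulrCA.
Qed.

Lemma opscaleA a b A : opscale a (opscale b A) = opscale (a * b) A.
Proof. by apply: op_ext => y z; rewrite /opscale mulrA. Qed.

Lemma opscale1 A : opscale 1 A = A.
Proof. by apply: op_ext => y z; rewrite /opscale mul1r. Qed.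

Lemma opadjK A : opadj (opadj A) = A.
Proof. by apply: op_ext => y z; rewrite /opadj conjcK. Qed.

Lemma opadj0 : opadj (@op0 R T) = op0.
Proof. by apply: op_ext => y z; rewrite /opadj /op0 conjc0. Qed.

Lemma opadj_mul A B : opadj (opmul A B) = opmul (opadj B) (opadj A).
Proof.
apply: op_ext => y z; rewrite /opadj /opmul rmorph_sum.
by apply: eq_bigr => w _; rewrite rmorphM mulrC.
Qed.

Lemma opadjZ c A : opadj (opscale c A) = opscale c^* (opadj A).
Proof. by apply: op_ext => y z; rewrite /opadj /opscale rmorphM. Qed.

Definition opI : @op R T := fun y z => (y == z)%:R.

Lemma opmul1r A : opmul A opI = A.
Proof.
apply: op_ext => y z; rewrite /opmul /opI (bigD1 z) //= eqxx mulr1.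
by rewrite big1 ?addr0 // => w /negbTE ->; rewrite mulr0.
Qed.

Definition isometry A := opmul (opadj A) A = opI.

Lemma isometryK A : isometry A -> forall X, opmul (opmul X (opadj A)) A = X.
Proof. by move=> isoA X; rewrite -opmulA isoA opmul1r. Qed.

Definition opdiag f : @op R T := fun y z => ((y == z) && f y)%:R.

Lemma opdiag_mull f A y z : opmul (opdiag f) A y z = (f y)%:R * A y z.
Proof.
rewrite /opmul /opdiag (bigD1 y) //= eqxx big1 ?addr0 // => w /negbTE.
by rewrite eq_sym => ->; rewrite mul0r.
Qed.

Lemma opdiag_mulr f A y z : opmul A (opdiag f) y z = A y z * (f z)%:R.
Proof.
rewrite /opmul /opdiag (bigD1 z) //= eqxx big1 ?addr0 // => w /negbTE ->.
by rewrite mulr0.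
Qed.

Lemma opdiag_mul f g : opmul (opdiag f) (opdiag g) = opdiag (predI f g).
Proof.
apply: op_ext => y z; rewrite opdiag_mull /opdiag /=.
by case: eqP => [->|_]; case: (f _); rewrite ?mul1r ?mul0r.
Qed.

Lemma opdiagC f g : opmul (opdiag f) (opdiag g) = opmul (opdiag g) (opdiag f).
Proof. by rewrite !opdiag_mul; congr opdiag; apply: functional_extensionality => y /=; rewrite andbC. Qed.

Lemma opdiag_adj f : opadj (opdiag f) = opdiag f.
Proof.
apply: op_ext => y z; rewrite /opadj /opdiag conjc_nat eq_sym.
by case: eqP => [->|].
Qed.

Lemma opdiag_intertwine f g A : (forall y z, A y z != 0 -> f y = g z) ->
  opmul (opdiag f) A = opmul A (opdiag g).
Proof.
move=> fAg; apply: op_ext => y z; rewrite opdiag_mull opdiag_mulr.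
by have [->|/fAg ->] := eqVneq (A y z) 0; rewrite ?mulr0 ?mul0r // mulrC.
Qed.

Lemma opdiag_intertwine_adj f g A :
  opmul (opdiag f) A = opmul A (opdiag g) ->
  opmul (opadj A) (opdiag f) = opmul (opdiag g) (opadj A).
Proof. by move=> fAg; rewrite -[opdiag f]opdiag_adj -[opdiag g]opdiag_adj -!opadj_mul fAg. Qed.

End OperatorAlgebra.
Arguments opmulA_rew {R T A B D E}.
Arguments isometryK {R T A}.

Section BlockOperators.
Context {R : realType} {k : nat}.
Implicit Types a b c d e f g h : @op R (word k).
Local Notation O := (@op0 R (word k)).

Lemma block_mul a b c d e f g h :
  opmul (block k a b c d) (block k e f g h) =
  block k (opadd (opmul a e) (opmul b g)) (opadd (opmul a f) (opmul b h))
          (opadd (opmul c e) (opmul d g)) (opadd (opmul c f) (opmul d h)).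
Proof. by apply: op_ext => y z; rewrite /opmul big_sumType; case: y; case: z. Qed.

Lemma block_adj a b c d :
  opadj (block k a b c d) = block k (opadj a) (opadj c) (opadj b) (opadj d).
Proof. by apply: op_ext => y z; case: y; case: z. Qed.

Lemma block_diag_conj a b c p q :
  opmul (opadj (block k a b c O)) (opmul (block k p O O q) (block k a b c O)) =
  block k (opadd (opmul (opadj a) (opmul p a)) (opmul (opadj c) (opmul q c)))
          (opmul (opadj a) (opmul p b))
          (opmul (opadj b) (opmul p a))
          (opmul (opadj b) (opmul p b)).
Proof.
rewrite block_adj opadj0 !block_mul.
by rewrite !(opmul0l, opmul0r, opadd0l, opadd0r).
Qed.

End BlockOperators.

Lemma sum_eq_indicator {V : nzRingType} {T : finType} (r : T) (G : T -> V) :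
  \sum_w (w == r)%:R * G w = G r.
Proof. by rewrite (bigD1 r) //= eqxx mul1r big1 ?addr0 // => w /negbTE ->; rewrite mul0r. Qed.

Lemma sum_tuple_eq {V : nzRingType} n (s : seq bool) : size s = n ->
  \sum_(u : n.-tuple bool) ((s == u)%:R : V) = 1.
Proof.
move=> size_s; pose u0 : n.-tuple bool := insubd [tuple of nseq n false] s.
have u0E : val u0 = s by rewrite val_insubd size_s eqxx.
rewrite (bigD1 u0) //= -u0E eqxx big1 ?addr0 // => u neq_u.
by rewrite val_eqE eq_sym (negbTE neq_u).
Qed.

Lemma swap_last2_cat (t : seq bool) a b : swap_last2 (t ++ [:: a; b]) = t ++ [:: b; a].
Proof.
rewrite /swap_last2 size_cat /= addnK take_cat ltnn subnn take0 cats0.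
have -> : (size t + 2 - 1 = (size t).+1)%N by rewrite addn2 subn1.
by rewrite !nth_cat ltnn subnn ltnNge leqnSn /= subSnn.
Qed.

Lemma split_last2 (s : seq bool) : (1 < size s)%N -> exists t a b, s = t ++ [:: a; b].
Proof.
case/lastP: s => [//|s b]; case/lastP: s => [//|t a] _.
by exists t, a, b; rewrite -!cats1 -catA.
Qed.

Lemma size_swap_last2 (s : seq bool) : (1 < size s)%N -> size (swap_last2 s) = size s.
Proof. by case/split_last2 => t [a [b ->]]; rewrite swap_last2_cat !size_cat. Qed.

Lemma swap_last2K (s : seq bool) : (1 < size s)%N -> swap_last2 (swap_last2 s) = s.
Proof. by case/split_last2 => t [a [b ->]]; rewrite !swap_last2_cat. Qed.

Section Words.
Variables (R : realType) (k : nat).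

Definition occurs_at n (x : seq bool) : pred (word k) :=
  fun y => take (size x) (drop n y) == x.

Definition head_is b : pred (word k) := fun y => head false y == b.

Lemma PT_occurs n x : (n + size x <= k)%N -> @PT R k n x = opdiag (occurs_at n x).
Proof.
move=> nx_le; apply: op_ext => y z; rewrite /PT /opdiag /Pcyl /occurs_at.
case: (y == z) => /=; last by rewrite big1.
have size_take_y : size (take n y) = n by rewrite size_take size_tuple; case: ltnP; lia.
under eq_bigr => u _ do rewrite size_cat size_tuple takeD eqseq_cat ?size_take_y ?size_tuple //.
case: (take _ (drop n y) == x); last by rewrite big1 // => u _; rewrite andbF.
by under eq_bigr => u _ do rewrite andbT; rewrite sum_tuple_eq.
Qed.

Lemma Pcyl1_head b : (0 < k)%N -> @Pcyl R k [:: b] = opdiag (head_is b).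
Proof.
move=> k_gt0; apply: op_ext => y z; rewrite /Pcyl /opdiag /head_is /=.
case: y => [[|a t] size_y] /=; first by rewrite -(eqP size_y) in k_gt0.
by rewrite take0 eqseq_cons andbT.
Qed.

Definition word_shift (z : word k) (b : bool) : word k := insubd z (rcons (behead z) b).

Definition word_swap (z : word k) : word k := insubd z (swap_last2 z).

Lemma word_shiftE z b : (0 < k)%N -> val (word_shift z b) = rcons (behead z) b.
Proof. by move=> k_gt0; rewrite val_insubd size_rcons size_behead size_tuple prednK ?eqxx. Qed.

Lemma word_swapE z : (1 < k)%N -> val (word_swap z) = swap_last2 z.
Proof. by move=> k_gt1; rewrite val_insubd size_swap_last2 size_tuple ?k_gt1 ?eqxx. Qed.

Lemma word_swapK z : (1 < k)%N -> word_swap (word_swap z) = z.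
Proof. by move=> k_gt1; apply: val_inj; rewrite !word_swapE // swap_last2K // size_tuple. Qed.

Lemma UbarE (U : 'M[R[i]]_2) y z : (0 < k)%N -> Ubar k U y z =
  \sum_(b : bool) (y == word_shift z b)%:R * U (bit b) (bit (head false z)).
Proof. by move=> k_gt0; apply: eq_bigr => b _; rewrite -val_eqE /= word_shiftE. Qed.

Lemma sigmaE y z : (1 < k)%N -> @sigma R k y z = (y == word_swap z)%:R.
Proof. by move=> k_gt1; rewrite /sigma -val_eqE /= word_swapE. Qed.

End Words.
Arguments occurs_at {k}.
Arguments head_is {k}.
Arguments word_shift {k}.
Arguments word_swap {k}.
Arguments word_swapK {k}.

Lemma bit_inj : injective bit.
Proof. by case; case. Qed.

Lemma expi_conjM {R : realType} (t : R) : (expi t)^* * expi t = 1.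
Proof.
rewrite /expi /=; apply/eqP; rewrite eq_complex /=.
by rewrite -(cos2Dsin2 t) !expr2; apply/andP; split; apply/eqP; ring.
Qed.

Section Tower.
Variables (R : realType) (k : nat) (U : 'M[R[i]]_2).
Hypothesis k_gt2 : (2 < k)%N.
Hypothesis U_unitary : U *m (map_mx (@Num.conj _) U)^T = 1%:M.

Let k_gt0 : (0 < k)%N. Proof. exact: ltnW (ltnW k_gt2). Qed.
Let k_gt1 : (1 < k)%N. Proof. exact: ltnW k_gt2. Qed.

Local Notation Ub := (Ubar k U).
Local Notation S := (@sigma R k).

Lemma U_columns_orthonormal i j :
  \sum_(b : bool) (U (bit b) i)^* * U (bit b) j = (i == j)%:R.
Proof.
have := mulmx1C U_unitary => /matrixP /(_ i j); rewrite !mxE => <-.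
rewrite big_bool big_ord_recl big_ord1 /= addrC; congr (_ + _); rewrite !mxE //.
by have -> : lift ord0 ord0 = ord_max :> 'I_2 by apply: val_inj.
Qed.

Lemma adjUbar_mulE (X : op (word k)) y z :
  opmul (opadj Ub) X y z =
  \sum_(d : bool) (U (bit d) (bit (head false y)))^* * X (word_shift y d) z.
Proof.
rewrite /opmul /opadj.
under eq_bigr do rewrite UbarE // rmorph_sum big_distrl.
rewrite exchange_big /=; apply: eq_bigr => d _.
under eq_bigr do rewrite rmorphM rmorph_nat -mulrA.
by rewrite sum_eq_indicator.
Qed.

Lemma mul_UbarE (X : op (word k)) y z :
  opmul X Ub y z = \sum_(c : bool) U (bit c) (bit (head false z)) * X y (word_shift z c).
Proof.
rewrite /opmul.
under eq_bigr do rewrite UbarE // big_distrr.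
rewrite exchange_big /=; apply: eq_bigr => c _.
under eq_bigr do rewrite mulrCA.
by rewrite sum_eq_indicator mulrC.
Qed.

Lemma sigma_mulE (X : op (word k)) y z : opmul S X y z = X (word_swap y) z.
Proof.
rewrite /opmul; under eq_bigr => v _ do rewrite sigmaE //.
rewrite -(sum_eq_indicator (word_swap y) (X^~ z)); apply: eq_bigr => v _.
by have -> : (y == word_swap v) = (v == word_swap y) by apply/eqP/eqP => ->; rewrite word_swapK.
Qed.

Lemma word_shift_eq (y z : word k) b c :
  (word_shift y b == word_shift z c) = (behead y == behead z) && (b == c).
Proof. by rewrite -val_eqE /= !word_shiftE // eqseq_rcons. Qed.

Lemma word_eq_head_behead (y z : word k) :
  (y == z) = (head false y == head false z) && (behead y == behead z).
Proof.
rewrite -val_eqE /=; case: y z => [[|a s] size_y] [[|b t] size_z] //=.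
- by move: k_gt0; rewrite -(eqP size_y).
- by move: k_gt0; rewrite -(eqP size_z).
Qed.

Lemma Ubar_isometry : isometry Ub.
Proof.
apply: op_ext => y z; rewrite adjUbar_mulE /opI.
under eq_bigr do rewrite UbarE // big_distrr.
rewrite exchange_big /=.
under eq_bigr do (under eq_bigr do rewrite word_shift_eq mulrCA).
rewrite word_eq_head_behead -[head false y == _](inj_eq bit_inj).
case: (behead y == behead z) => /=.
- rewrite andbT -U_columns_orthonormal; apply: eq_bigr => b _.
  by rewrite big_bool; case: b => /=; rewrite mul1r mul0r ?addr0 ?add0r.
- by rewrite andbF big1 // => b _; rewrite big1 // => c _; rewrite mul0r.
Qed.

Lemma sigma_isometry : isometry S.
Proof.
apply: op_ext => y z; rewrite /opmul /opadj /opI.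
under eq_bigr do rewrite !sigmaE // conjc_nat.
rewrite (sum_eq_indicator (word_swap y) (fun w => (w == word_swap z)%:R)).
by rewrite (inj_eq (can_inj (fun w => word_swapK w k_gt1))).
Qed.

Lemma Ubar_support y z : Ub y z != 0 -> exists b, y = word_shift z b.
Proof.
rewrite UbarE // big_bool /=.
case: (y =P word_shift z true) => [->|_]; first by exists true.
case: (y =P word_shift z false) => [->|_]; first by exists false.
by rewrite !mul0r addr0 eqxx.
Qed.

Lemma occurs_at_Ubar n x : (n + size x < k)%N ->
  opmul (opdiag (occurs_at n x)) Ub = opmul Ub (opdiag (occurs_at n.+1 x)).
Proof.
move=> nx_lt; apply: opdiag_intertwine => y z /Ubar_support [b ->].
rewrite /occurs_at word_shiftE // drop_rcons; last by rewrite size_behead size_tuple; lia.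
rewrite -cats1 takel_cat; last by rewrite size_drop size_behead size_tuple; lia.
by rewrite -drop1 drop_drop addn1.
Qed.

Lemma occurs_at_sigma n x : (n + size x <= k - 2)%N ->
  opmul (opdiag (occurs_at n x)) S = opmul S (opdiag (occurs_at n x)).
Proof.
move=> nx_le; apply: opdiag_intertwine => y z; rewrite sigmaE //.
case: (y =P word_swap z) => [-> _|]; last by rewrite eqxx.
have [t [a [b zE]]] : exists (t : seq bool) a b, val z = t ++ [:: a; b].
  by apply: split_last2; rewrite size_tuple.
have size_t : size t = (k - 2)%N by rewrite -(size_tuple z) zE size_cat /= addnK.
rewrite /occurs_at word_swapE // zE swap_last2_cat !drop_cat.
case: ltnP => [n_lt|n_ge].
  by rewrite !takel_cat // size_drop; lia.
have -> : size x = 0%N by lia.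
by rewrite !take0.
Qed.

Lemma head_word_shift (z : word k) c : head false (word_shift z c) = head false (behead z).
Proof.
rewrite word_shiftE //; have : (0 < size (behead z))%N by rewrite size_behead size_tuple; lia.
by case: (behead z).
Qed.

Lemma word_swap_shift_eq (y z : word k) t a d c b : behead y = rcons t a ->
  (word_swap (word_shift y d) == word_shift (word_shift z c) b) =
  [&& t == behead (behead z), d == c & a == b].
Proof.
move=> yE; rewrite -val_eqE /= word_swapE // !word_shiftE // yE.
have -> : behead (rcons (behead z) c) = rcons (behead (behead z)) c.
  have : (0 < size (behead z))%N by rewrite size_behead size_tuple; lia.
  by case: (behead z).
by rewrite -!cats1 -catA swap_last2_cat -cat1s catA !cats1 !eqseq_rcons andbA.
Qed.

Lemma adjUbar_sigma_Ubar2E (y z : word k) (t : seq bool) a : behead y = rcons t a ->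
  opmul (opadj Ub) (opmul S (opmul Ub Ub)) y z =
  (t == behead (behead z))%:R * U (bit a) (bit (head false (behead z))) *
  \sum_(d : bool) (U (bit d) (bit (head false y)))^* * U (bit d) (bit (head false z)).
Proof.
move=> yE; rewrite adjUbar_mulE big_distrr /=; apply: eq_bigr => d _.
rewrite sigma_mulE mul_UbarE.
under eq_bigr do rewrite UbarE // head_word_shift.
under eq_bigr do under eq_bigr do rewrite (word_swap_shift_eq _ _ _ _ _ _ _ yE).
clear yE; rewrite !big_bool; case: (t == _); case: a; case: d;
  by rewrite /= ?(mul0r, mul1r, addr0, add0r); ring.
Qed.

Lemma adjUbar_sigma_Ubar2_head (y z : word k) : head false y != head false z ->
  opmul (opadj Ub) (opmul S (opmul Ub Ub)) y z = 0.
Proof.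
have : (0 < size (behead y))%N by rewrite size_behead size_tuple; lia.
case/lastP yE: (behead y) => [//|t a] _ neq_yz.
rewrite (adjUbar_sigma_Ubar2E _ z _ _ yE) U_columns_orthonormal (inj_eq bit_inj).
by rewrite (negbTE neq_yz) mulr0.
Qed.

Lemma Ubar_sigma_orthogonal :
  opmul (opmul (opdiag (head_is false)) (opmul (opadj Ub) (opmul S (opmul Ub Ub))))
        (opdiag (head_is true)) = op0.
Proof.
apply: op_ext => y z; rewrite opdiag_mulr opdiag_mull /head_is.
case: (head false y) (head false z) (@adjUbar_sigma_Ubar2_head y z) => [] [] /= M0;
  by rewrite /op0 ?mul0r ?mulr0 // mulr1 mul1r M0.
Qed.

Lemma adjUbar_occurs_at n x : (n + size x < k)%N ->
  opmul (opadj Ub) (opdiag (occurs_at n x)) = opmul (opdiag (occurs_at n.+1 x)) (opadj Ub).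
Proof. by move=> nx_lt; apply/opdiag_intertwine_adj/occurs_at_Ubar. Qed.

Lemma adjsigma_occurs_at n x : (n + size x <= k - 2)%N ->
  opmul (opadj S) (opdiag (occurs_at n x)) = opmul (opdiag (occurs_at n x)) (opadj S).
Proof. by move=> nx_le; apply/opdiag_intertwine_adj/occurs_at_sigma. Qed.

Section Blocks.
Variables (n : nat) (x : seq bool).
Hypothesis nx_lt : (n + size x < k - 1)%N.

Let nx_lt_k : (n + size x < k)%N. Proof. lia. Qed.
Let Snx_lt_k : (n.+1 + size x < k)%N. Proof. lia. Qed.
Let nx_le_k2 : (n + size x <= k - 2)%N. Proof. lia. Qed.
Let PT_n : @PT R k n x = opdiag (occurs_at n x). Proof. by rewrite PT_occurs 1?ltnW. Qed.
Let PT_Sn : @PT R k n.+1 x = opdiag (occurs_at n.+1 x). Proof. by rewrite PT_occurs 1?ltnW. Qed.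

Lemma tower_block00 theta :
  opadd (opmul (opadj (opmul Ub (Pcyl k [:: false])))
               (opmul (PT k n x) (opmul Ub (Pcyl k [:: false]))))
        (opmul (opadj (opscale (expi theta) (opmul Ub (Pcyl k [:: true]))))
               (opmul (opmul (Pprime k U true) (PT k n x))
                      (opscale (expi theta) (opmul Ub (Pcyl k [:: true])))))
  = PT k n.+1 x.
Proof.
rewrite /Pprime PT_n PT_Sn !Pcyl1_head //.
rewrite !opadjZ !opmulZl !opmulZr opscaleA expi_conjM opscale1.
rewrite !opadj_mul !opdiag_adj !opmulA !(isometryK Ubar_isometry).
rewrite !(opmulA_rew (adjUbar_occurs_at n x nx_lt_k)) !(isometryK Ubar_isometry) !opdiag_mul.
apply: op_ext => y z; rewrite /opadd /opdiag /head_is /=.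
by case: (y == z); case: (head false y); case: (occurs_at _ _ y); rewrite ?addr0 ?add0r.
Qed.

Lemma tower_block01 :
  opmul (opadj (opmul Ub (Pcyl k [:: false])))
        (opmul (PT k n x) (opmul (opmul S Ub) (Pprime k U true))) = op0.
Proof.
rewrite /Pprime PT_n !Pcyl1_head // opadj_mul opdiag_adj !opmulA.
rewrite (opmulA_rew (occurs_at_sigma n x nx_le_k2)).
rewrite (opmulA_rew (occurs_at_Ubar n x nx_lt_k)) (opmulA_rew (occurs_at_Ubar n.+1 x Snx_lt_k)) (opmulA_rew (opdiagC _ _)).
by have := Ubar_sigma_orthogonal; rewrite !opmulA => ->; rewrite !opmul0l.
Qed.

Lemma tower_block10 :
  opmul (opadj (opmul (opmul S Ub) (Pprime k U true)))
        (opmul (PT k n x) (opmul Ub (Pcyl k [:: false]))) = op0.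
Proof.
rewrite -opadj0 -tower_block01 /Pprime PT_n !Pcyl1_head //.
by rewrite !opadj_mul !opadjK !opdiag_adj !opmulA.
Qed.

Lemma tower_block11 :
  opmul (opadj (opmul (opmul S Ub) (Pprime k U true)))
        (opmul (PT k n x) (opmul (opmul S Ub) (Pprime k U true)))
  = opmul (Pprime k U true) (PT k n.+1 x).
Proof.
rewrite /Pprime PT_n PT_Sn !Pcyl1_head // !opadj_mul opadjK opdiag_adj !opmulA.
rewrite (opmulA_rew (adjsigma_occurs_at n x nx_le_k2)) (isometryK sigma_isometry).
rewrite (opmulA_rew (adjUbar_occurs_at n x nx_lt_k)) (isometryK Ubar_isometry).
rewrite !(opmulA_rew (adjUbar_occurs_at n.+1 x Snx_lt_k)) !(isometryK Ubar_isometry).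
rewrite -!opmulA; congr (opmul Ub); rewrite !opmulA; congr (opmul _ (opadj Ub)).
rewrite !opdiag_mul; congr opdiag; apply: functional_extensionality => y /=.
by rewrite andbC andbA andbb.
Qed.

End Blocks.
End Tower.

Theorem corollary2 (R : realType) (k : nat) (U : 'M[R[i]]_2) (theta : R)
    (n : nat) (x : seq bool) :
  (3 <= k)%N ->
  U *m (map_mx (@Num.conj _) U)^T = 1%:M ->
  (forall i j : 'I_2, `|U i j| = ((Num.sqrt (2 : R))^-1)%:C%C) ->
  (n + size x < k - 1)%N ->
  opmul (opadj (Utilde k U theta)) (opmul (Ptilde k U n x) (Utilde k U theta))
  = Ptilde k U n.+1 x.
Proof.
move=> k_ge3 U_unitary _ nx_lt.
rewrite /Utilde /Ptilde block_diag_conj.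
by rewrite tower_block00 // tower_block01 // tower_block10 // tower_block11.
Qed.
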